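(* Let $r,K,\mu$ satisfy Assumption 1, let $a_0:=\frac{\pi}{\sqrt{2(1-\mu)}}$ and $a>a_0$. Every positive solution $(w,m)\in C^0([-a,a])^2$ of the localized problem (P$_a$) with speed $c=0$ satisfies $$\max_{[-a_0,a_0]}(w+m)\ge \frac K2(1-\mu).$$
   Context: Assumption 1: $r\in(1,\infty)$, $\mu\in\left(0,\min\left(\frac r2,1-\frac1r,1-K,K\right)\right)$, $K\in\left(0,\min\left(1,\frac{r}{r-1}\left(1-\frac{\mu}{1-\mu}\right)\right)\right)$. $f_w(w,m):=w(1-(w+m))+\mu(m-w)$, $f_m(w,m):=rm\left(1-\frac{w+m}{K}\right)+\mu(w-m)$; $(w^*,m^* )$ is the unique solution in $(0,1)\times(0,K)$ of $f_w=f_m=0$. The localized problem (P$_a$) with speed $c$: $w,m\in C^0([-a,a])$ satisfy, in the weak sense on $(-a,a)$, $-cw'-w''=f_w(w,m)\chi_{w\ge0}\chi_{m\ge0}$, $-cm'-m''=f_m(w,m)\chi_{w\ge0}\chi_{m\ge0}$, with $w(-a)=w^*$, $m(-a)=m^*$, $w(a)=m(a)=0$. *)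

From Stdlib Require Import Reals Lra.
Open Scope R_scope.

Definition assumption1 (r K mu : R) : Prop :=
  1 < r /\
  0 < mu /\ mu < r / 2 /\ mu < 1 - 1 / r /\ mu < 1 - K /\ mu < K /\
  0 < K /\ K < 1 /\ K < r / (r - 1) * (1 - mu / (1 - mu)).

Definition f_w (mu w m : R) : R := w * (1 - (w + m)) + mu * (m - w).
Definition f_m (r K mu w m : R) : R :=
  r * m * (1 - (w + m) / K) + mu * (w - m).

Definition chi_nonneg (v : R) : R := if Rle_dec 0 v then 1 else 0.

Definition cont_on_closed (a : R) (u : R -> R) : Prop :=
  forall x, -a <= x <= a -> continue_in u (fun y => -a <= y <= a) x.

(* D is the sequence of successive derivatives of D 0 (so D 0 is C^infinity) *)
Definition deriv_seq (D : nat -> R -> R) : Prop :=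
  forall (n : nat) (x : R), derivable_pt_lim (D n) x (D (S n) x).

Definition compact_supp_in (a : R) (phi : R -> R) : Prop :=
  exists b, 0 <= b < a /\ forall x, b <= Rabs x -> phi x = 0.

(* u solves  -c u' - u'' = F  in the weak (distributional) sense on (-a,a):
   for every test function phi in C_c^infty((-a,a)),
   int_{-a}^{a} u (c phi' - phi'') = int_{-a}^{a} F phi. *)
Definition weak_sol (a c : R) (u F : R -> R) : Prop :=
  forall D : nat -> R -> R,
    deriv_seq D -> compact_supp_in a (D 0%nat) ->
    forall (Hi1 : Riemann_integrable
                    (fun x => u x * (c * D 1%nat x - D 2%nat x)) (-a) a)
           (Hi2 : Riemann_integrable (fun x => F x * D 0%nat x) (-a) a),
      RiemannInt Hi1 = RiemannInt Hi2.

Definition solves_Pa (r K mu a c wstar mstar : R) (w m : R -> R) : Prop :=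
  cont_on_closed a w /\ cont_on_closed a m /\
  weak_sol a c w
    (fun x => f_w mu (w x) (m x) * chi_nonneg (w x) * chi_nonneg (m x)) /\
  weak_sol a c m
    (fun x => f_m r K mu (w x) (m x) * chi_nonneg (w x) * chi_nonneg (m x)) /\
  w (-a) = wstar /\ m (-a) = mstar /\ w a = 0 /\ m a = 0.

From Stdlib Require Import Reals Lra Lia List Classical.
From Coquelicot Require Import Coquelicot.
Open Scope R_scope.

(* Suppose w + m < K (1 - mu) / 2 on [-a0, a0].  Since w > 0 there, the equation
   for m gives -m'' = f_m(w, m) >= lam m with lam = r (1 + mu) / 2 - mu, and
   lam - (1 - mu) / 2 = (r - 1) (1 + mu) / 2 > 0, where (1 - mu) / 2 = (pi / (2 a0))^2
   is the principal Dirichlet eigenvalue of -d^2/dx^2 on [-a0, a0].  A smooth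
   perturbation phi = cos(k x) exp(-c / cos(k x)) of the principal eigenfunction
   (k = pi / (2 a0), c small) is a test function, positive on (-a0, a0) and satisfying
   -phi'' < lam phi there.  Testing the weak equation for m against phi then gives
   0 = int (f_m(w, m) phi + m phi'') >= int m (lam phi + phi'') > 0. *)

Lemma derivable_pt_lim_local (f g : R -> R) (x l d : R) : 0 < d ->
  (forall y, Rabs (y - x) < d -> f y = g y) ->
  derivable_pt_lim f x l -> derivable_pt_lim g x l.
Proof.
  intros Hd Heq Hf eps Heps. destruct (Hf eps Heps) as [del Hdel].
  assert (Hmin : 0 < Rmin del d) by (apply Rmin_glb_lt; [apply cond_pos | lra]).
  exists (mkposreal _ Hmin). intros h Hh0 Hh. simpl in Hh.
  pose proof (Rmin_l del d). pose proof (Rmin_r del d).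
  rewrite <- !Heq.
  - apply Hdel; [exact Hh0 | lra].
  - unfold Rminus; rewrite Rplus_opp_r, Rabs_R0; lra.
  - replace (x + h - x) with h by ring. lra.
Qed.

Lemma derivable_pt_lim_zero_on (f : R -> R) (lo hi x l : R) :
  lo < hi -> lo <= x <= hi -> (forall y, lo <= y <= hi -> f y = 0) ->
  derivable_pt_lim f x l -> l = 0.
Proof.
  intros Hlohi Hx Hf Hd. apply NNPP; intros Hl.
  destruct (Hd (Rabs l) (Rabs_pos_lt _ Hl)) as [del Hdel].
  pose proof (cond_pos del).
  assert (Hh : exists h, h <> 0 /\ Rabs h < del /\ lo <= x + h <= hi).
  { destruct (Rlt_or_le x hi) as [Hxhi | Hxhi].
    - pose proof (Rmin_l del (hi - x)); pose proof (Rmin_r del (hi - x)).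
      assert (0 < Rmin del (hi - x)) by (apply Rmin_glb_lt; lra).
      exists (Rmin del (hi - x) / 2). rewrite Rabs_right by lra. repeat split; lra.
    - pose proof (Rmin_l del (x - lo)); pose proof (Rmin_r del (x - lo)).
      assert (0 < Rmin del (x - lo)) by (apply Rmin_glb_lt; lra).
      exists (- (Rmin del (x - lo) / 2)). rewrite Rabs_left by lra. repeat split; lra. }
  destruct Hh as [h [Hh0 [Hhdel Hxh]]].
  specialize (Hdel h Hh0 Hhdel). rewrite !Hf in Hdel by lra.
  replace ((0 - 0) / h - l) with (- l) in Hdel by (field; exact Hh0).
  rewrite Rabs_Ropp in Hdel. lra.
Qed.

Lemma deriv_seq_zero_on (D : nat -> R -> R) (lo hi : R) :
  deriv_seq D -> lo < hi -> (forall x, lo <= x <= hi -> D 0%nat x = 0) ->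
  forall n x, lo <= x <= hi -> D n x = 0.
Proof.
  intros HD Hlohi H0 n. induction n as [|n IH]; [exact H0|].
  intros x Hx. exact (derivable_pt_lim_zero_on (D n) lo hi x _ Hlohi Hx IH (HD n x)).
Qed.

Lemma deriv_seq_continuity_pt (D : nat -> R -> R) n x : deriv_seq D -> continuity_pt (D n) x.
Proof. intros HD. apply derivable_continuous_pt. exists (D (S n) x). apply HD. Qed.

Definition clip (b : R) (D : nat -> R -> R) (n : nat) (x : R) : R :=
  if Rle_dec (Rabs x) b then D n x else 0.

Section Clip.
Variables (a0 b : R) (D : nat -> R -> R).
Hypothesis Ha0b : a0 < b.
Hypothesis Hband : forall n x, a0 <= Rabs x <= b -> D n x = 0.

Lemma clip_eq n x : Rabs x <= b -> clip b D n x = D n x.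
Proof. intros Hx. unfold clip. destruct (Rle_dec (Rabs x) b); [reflexivity | lra]. Qed.

Lemma clip_zero n x : a0 <= Rabs x -> clip b D n x = 0.
Proof. intros Hx. unfold clip. destruct (Rle_dec (Rabs x) b); [apply Hband; lra | reflexivity]. Qed.

Lemma deriv_seq_clip : deriv_seq D -> deriv_seq (clip b D).
Proof.
  intros HD n x. destruct (Rlt_or_le (Rabs x) b) as [Hin | Hout].
  - rewrite clip_eq by lra.
    apply derivable_pt_lim_local with (D n) (b - Rabs x); [lra | | apply HD].
    intros y Hy. rewrite clip_eq; [reflexivity |]. pose proof (Rabs_triang_inv y x). lra.
  - rewrite clip_zero by lra.
    apply derivable_pt_lim_local with (fun _ => 0) (Rabs x - a0);
      [lra | | apply derivable_pt_lim_const].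
    intros y Hy. rewrite clip_zero; [reflexivity |].
    pose proof (Rabs_triang_inv x y). rewrite Rabs_minus_sym in Hy. lra.
Qed.

End Clip.

Fixpoint Cn (n : nat) (f : R -> R) : Prop :=
  match n with
  | O => True
  | S n => exists f', (forall x, derivable_pt_lim f x (f' x)) /\ Cn n f'
  end.

Definition smooth (f : R -> R) : Prop := forall n, Cn n f.

Lemma Cn_S n f : Cn (S n) f -> Cn n f.
Proof.
  revert f. induction n as [|n IH]; [intros; exact I|].
  intros f [f' [Hf Cf']]. exists f'. split; [exact Hf | apply IH, Cf'].
Qed.

Lemma Cn_const n (a : R) : Cn n (fun _ => a).
Proof.
  revert a. induction n as [|n IH]; [intros; exact I|]. intros a.
  exists (fun _ => 0). split; [intros x; apply derivable_pt_lim_const | apply IH].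
Qed.

Lemma Cn_id n : Cn n (fun x => x).
Proof.
  destruct n as [|n]; [intros; exact I|].
  exists (fun _ => 1). split; [intros x; apply derivable_pt_lim_id | apply Cn_const].
Qed.

Lemma Cn_opp n f : Cn n f -> Cn n (fun x => - f x).
Proof.
  revert f. induction n as [|n IH]; [intros; exact I|]. intros f [f' [Hf Cf']].
  exists (fun x => - f' x). split; [intros x; apply (derivable_pt_lim_opp f), Hf | apply IH, Cf'].
Qed.

Lemma Cn_plus n f g : Cn n f -> Cn n g -> Cn n (fun x => f x + g x).
Proof.
  revert f g. induction n as [|n IH]; [intros; exact I|]. intros f g [f' [Hf Cf']] [g' [Hg Cg']].
  exists (fun x => f' x + g' x).
  split; [intros x; apply (derivable_pt_lim_plus f g), Hg; apply Hf | apply IH; assumption].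
Qed.

Lemma Cn_mult n f g : Cn n f -> Cn n g -> Cn n (fun x => f x * g x).
Proof.
  revert f g. induction n as [|n IH]; [intros; exact I|]. intros f g Cf Cg.
  pose proof (Cn_S _ _ Cf) as Cf0. pose proof (Cn_S _ _ Cg) as Cg0.
  destruct Cf as [f' [Hf Cf']]. destruct Cg as [g' [Hg Cg']].
  exists (fun x => f' x * g x + f x * g' x). split.
  - intros x. apply (derivable_pt_lim_mult f g); [apply Hf | apply Hg].
  - apply Cn_plus; apply IH; assumption.
Qed.

Lemma Cn_comp n f g : Cn n f -> Cn n g -> Cn n (fun x => g (f x)).
Proof.
  revert f g. induction n as [|n IH]; [intros; exact I|]. intros f g Cf Cg.
  pose proof (Cn_S _ _ Cf) as Cf0.
  destruct Cf as [f' [Hf Cf']]. destruct Cg as [g' [Hg Cg']].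
  exists (fun x => g' (f x) * f' x). split.
  - intros x. apply (derivable_pt_lim_comp f g); [apply Hf | apply Hg].
  - apply Cn_mult; [apply IH |]; assumption.
Qed.

Lemma Cn_cos_sin n : Cn n cos /\ Cn n sin.
Proof.
  induction n as [|n [Hcos Hsin]]; [split; exact I|]. split.
  - exists (fun x => - sin x). split; [apply derivable_pt_lim_cos | apply Cn_opp, Hsin].
  - exists cos. split; [apply derivable_pt_lim_sin | exact Hcos].
Qed.

Lemma Cn_ex_derive_n n f : Cn (S n) f -> forall x, ex_derive (Derive_n f n) x.
Proof.
  revert f. induction n as [|n IH]; intros f [f' [Hf Cf']] x.
  - exists (f' x). apply is_derive_Reals, Hf.
  - apply ex_derive_ext with (Derive_n f' n); [| apply IH, Cf'].
    intros t. replace (S n) with (n + 1)%nat by lia. rewrite <- Derive_n_comp.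
    apply Derive_n_ext. intros u. symmetry. apply is_derive_unique, is_derive_Reals, Hf.
Qed.

Lemma smooth_deriv_seq f : smooth f -> deriv_seq (Derive_n f).
Proof.
  intros Hf n x. apply is_derive_Reals, Derive_correct, (Cn_ex_derive_n n f (Hf (S n))).
Qed.

Lemma continuity_pt_mult_fun (f g : R -> R) x :
  continuity_pt f x -> continuity_pt g x -> continuity_pt (fun y => f y * g y) x.
Proof. apply continuity_pt_mult. Qed.

Lemma continuity_pt_plus_fun (f g : R -> R) x :
  continuity_pt f x -> continuity_pt g x -> continuity_pt (fun y => f y + g y) x.
Proof. apply continuity_pt_plus. Qed.

Lemma continuity_pt_minus_fun (f g : R -> R) x :
  continuity_pt f x -> continuity_pt g x -> continuity_pt (fun y => f y - g y) x.
Proof. apply continuity_pt_minus. Qed.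

Lemma continuity_pt_opp_fun (f : R -> R) x :
  continuity_pt f x -> continuity_pt (fun y => - f y) x.
Proof. apply continuity_pt_opp. Qed.

Lemma continuity_pt_const_fun (a x : R) : continuity_pt (fun _ => a) x.
Proof. apply continuity_pt_const. intros y z. reflexivity. Qed.

Ltac solve_continuity_pt :=
  repeat first
    [ assumption
    | apply continuity_pt_mult_fun
    | apply continuity_pt_minus_fun
    | apply continuity_pt_plus_fun
    | apply continuity_pt_opp_fun
    | apply continuity_pt_const_fun ].

Lemma continuity_pt_of_cont_on_closed (a : R) (u : R -> R) (x : R) :
  cont_on_closed a u -> -a < x < a -> continuity_pt u x.
Proof.
  intros Hu Hx eps Heps.
  destruct (Hu x (conj (Rlt_le _ _ (proj1 Hx)) (Rlt_le _ _ (proj2 Hx))) eps Heps)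
    as [alp [Halp Hclose]].
  pose proof (Rmin_l alp (Rmin (x + a) (a - x))). pose proof (Rmin_r alp (Rmin (x + a) (a - x))).
  pose proof (Rmin_l (x + a) (a - x)). pose proof (Rmin_r (x + a) (a - x)).
  exists (Rmin alp (Rmin (x + a) (a - x))). split; [apply Rmin_glb_lt; [exact Halp | apply Rmin_glb_lt; lra] |].
  intros y [[_ Hyx] Hd]. apply Hclose. simpl in *. unfold R_dist in *.
  apply Rabs_def2 in Hd. split; [split; [split; lra | exact Hyx] | apply Rabs_def1; lra].
Qed.

Lemma continuity_pt_chi_nonneg (u : R -> R) (x : R) :
  continuity_pt u x -> 0 < u x -> continuity_pt (fun y => chi_nonneg (u y)) x.
Proof.
  intros Hu Hux eps Heps. destruct (Hu (u x) Hux) as [alp [Halp Hclose]].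
  exists alp. split; [exact Halp |]. intros y Hy. specialize (Hclose y Hy).
  simpl in *. unfold R_dist in *. apply Rabs_def2 in Hclose.
  unfold chi_nonneg. destruct (Rle_dec 0 (u y)), (Rle_dec 0 (u x)); try lra.
  rewrite Rminus_diag, Rabs_R0. exact Heps.
Qed.

Lemma continuity_pt_ge_half (g : R -> R) (x0 : R) : continuity_pt g x0 -> 0 < g x0 ->
  exists d, 0 < d /\ forall x, Rabs (x - x0) < d -> g x0 / 2 <= g x.
Proof.
  intros Hg Hg0. destruct (Hg (g x0 / 2) ltac:(lra)) as [d [Hd Hclose]].
  exists d. split; [exact Hd |]. intros x Hx.
  destruct (Req_dec x x0) as [-> | Hne]; [lra |].
  assert (Hgx : Rabs (g x - g x0) < g x0 / 2) by (apply (Hclose x); split; [split; [exact I | auto] | exact Hx]).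
  apply Rabs_def2 in Hgx. lra.
Qed.

Lemma Riemann_integrable_zero_outside (f : R -> R) (lo l u hi : R) :
  lo <= l <= u -> u <= hi ->
  (forall x, l <= x <= u -> continuity_pt f x) ->
  (forall x, lo <= x <= l \/ u <= x <= hi -> f x = 0) ->
  Riemann_integrable f lo hi.
Proof.
  intros Hl Hu Hcont Hzero.
  assert (Hz : forall p q, p <= q -> (forall x, p <= x <= q -> f x = 0) -> Riemann_integrable f p q).
  { intros p q Hpq Hfz. apply Riemann_integrable_ext with (fct_cte 0); [| apply RiemannInt_P14].
    intros x Hx. rewrite Rmin_left, Rmax_right in Hx by exact Hpq. symmetry. apply Hfz, Hx. }
  apply RiemannInt_P24 with l; [apply Hz; [lra | intros; apply Hzero; lra] |].
  apply RiemannInt_P24 with u; [apply continuity_implies_RiemannInt; [lra | exact Hcont] |].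
  apply Hz; [lra | intros; apply Hzero; lra].
Qed.

Lemma RiemannInt_ge_const (f : R -> R) (lo hi m : R) (pr : Riemann_integrable f lo hi) :
  lo <= hi -> (forall x, lo < x < hi -> m <= f x) -> m * (hi - lo) <= RiemannInt pr.
Proof.
  intros Hle Hm. rewrite <- (RiemannInt_P15 (RiemannInt_P14 lo hi m)).
  apply RiemannInt_P19; assumption.
Qed.

Lemma RiemannInt_gt0 (f : R -> R) (lo hi x0 d eps : R) (pr : Riemann_integrable f lo hi) :
  0 < d -> 0 < eps -> lo <= x0 - d -> x0 + d <= hi ->
  (forall x, lo < x < hi -> 0 <= f x) -> (forall x, x0 - d < x < x0 + d -> eps <= f x) ->
  0 < RiemannInt pr.
Proof.
  intros Hd Heps Hlo Hhi Hnonneg Hbump.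
  assert (P1 : Riemann_integrable f lo (x0 - d)) by (apply RiemannInt_P22 with hi; [exact pr | lra]).
  assert (P23 : Riemann_integrable f (x0 - d) hi) by (apply RiemannInt_P23 with lo; [exact pr | lra]).
  assert (P2 : Riemann_integrable f (x0 - d) (x0 + d)) by (apply RiemannInt_P22 with hi; [exact P23 | lra]).
  assert (P3 : Riemann_integrable f (x0 + d) hi) by (apply RiemannInt_P23 with (x0 - d); [exact P23 | lra]).
  rewrite <- (RiemannInt_P26 P1 P23 pr), <- (RiemannInt_P26 P2 P3 P23).
  pose proof (RiemannInt_ge_const f _ _ 0 P1 Hlo ltac:(intros; apply Hnonneg; lra)).
  pose proof (RiemannInt_ge_const f _ _ eps P2 ltac:(lra) Hbump).
  pose proof (RiemannInt_ge_const f _ _ 0 P3 Hhi ltac:(intros; apply Hnonneg; lra)).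
  assert (0 < eps * (x0 + d - (x0 - d))) by (apply Rmult_lt_0_compat; lra).
  lra.
Qed.

(* Polynomials as lists of coefficients, constant term first. *)
Fixpoint peval (p : list R) (y : R) : R :=
  match p with nil => 0 | a :: p' => a + y * peval p' y end.

Fixpoint padd (p q : list R) : list R :=
  match p, q with
  | nil, _ => q
  | _, nil => p
  | a :: p', b :: q' => (a + b) :: padd p' q'
  end.

Definition pscale (s : R) (p : list R) : list R := map (fun a => s * a) p.

Fixpoint pder (p : list R) : list R :=
  match p with nil => nil | a :: p' => padd p' (0 :: pder p') end.

Fixpoint pabs_sum (p : list R) : R :=
  match p with nil => 0 | a :: p' => Rabs a + pabs_sum p' end.

Lemma peval_padd p q y : peval (padd p q) y = peval p y + peval q y.
Proof.
  revert q. induction p as [|a p IH]; intros [|b q]; simpl; try ring. rewrite IH. ring.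
Qed.

Lemma peval_pscale s p y : peval (pscale s p) y = s * peval p y.
Proof. induction p as [|a p IH]; simpl; [ring|]. fold (pscale s p). rewrite IH. ring. Qed.

Lemma derivable_pt_lim_peval p y : derivable_pt_lim (peval p) y (peval (pder p) y).
Proof.
  revert y. induction p as [|a p IH]; intros y; simpl.
  - apply derivable_pt_lim_const.
  - rewrite peval_padd. simpl.
    replace (peval p y + (0 + y * peval (pder p) y))
      with (0 + (1 * peval p y + y * peval (pder p) y)) by ring.
    apply (derivable_pt_lim_plus (fct_cte a) (id * peval p)%F);
      [apply derivable_pt_lim_const |].
    apply (derivable_pt_lim_mult id (peval p)); [apply derivable_pt_lim_id | apply IH].
Qed.

Lemma pabs_sum_ge0 p : 0 <= pabs_sum p.
Proof. induction p as [|a p IH]; simpl; [lra|]. pose proof (Rabs_pos a). lra. Qed.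

Lemma Rabs_peval_le p y : 1 <= y -> Rabs (peval p y) <= pabs_sum p * y ^ length p.
Proof.
  intros Hy. induction p as [|a p IH]; simpl.
  - rewrite Rabs_R0. lra.
  - pose proof (pabs_sum_ge0 p). pose proof (Rabs_pos a). pose proof (Rabs_pos (peval p y)).
    assert (1 <= y ^ length p) by (apply pow_R1_Rle; lra).
    eapply Rle_trans; [apply Rabs_triang |].
    rewrite Rabs_mult, (Rabs_right y) by lra.
    assert (y * Rabs (peval p y) <= y * (pabs_sum p * y ^ length p))
      by (apply Rmult_le_compat_l; lra).
    assert (1 <= y * y ^ length p) by nra.
    nra.
Qed.

Lemma pow_div_le_exp (M : nat) (x : R) : (0 < M)%nat -> 0 <= x -> (x / INR M) ^ M <= exp x.
Proof.
  intros HM Hx. assert (HM' : 0 < INR M) by (apply lt_0_INR; exact HM).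
  assert (Hpow : forall n t, exp (INR n * t) = exp t ^ n).
  { induction n as [|n IH]; intros t; simpl.
    - rewrite Rmult_0_l. apply exp_0.
    - rewrite <- IH, <- exp_plus. f_equal. destruct n; simpl; ring. }
  replace x with (INR M * (x / INR M)) at 2 by (field; lra).
  rewrite Hpow. apply pow_incr. split.
  - apply Rdiv_le_0_compat; lra.
  - pose proof (exp_ineq1_le (x / INR M)). lra.
Qed.

(* Smooth, with all derivatives vanishing at [0]. *)
Definition flat (c : R) (p : list R) (v : R) : R :=
  if Rlt_dec 0 v then peval p (/ v) * exp (- (c * / v)) else 0.

(* [(p (1/v) e^{-c/v})' = q (1/v) e^{-c/v}] with [q y = y^2 (c p y - p' y)]. *)
Definition flat_der (c : R) (p : list R) : list R :=
  0 :: 0 :: padd (pscale c p) (pscale (-1) (pder p)).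

Lemma flat_nonpos c p v : v <= 0 -> flat c p v = 0.
Proof. intros Hv. unfold flat. destruct (Rlt_dec 0 v); [lra | reflexivity]. Qed.

Lemma flat_pos c p v : 0 < v -> flat c p v = peval p (/ v) * exp (- (c * / v)).
Proof. intros Hv. unfold flat. destruct (Rlt_dec 0 v); [reflexivity | lra]. Qed.

Lemma Rabs_flat_div_le c p : 0 < c ->
  exists C, 0 <= C /\ forall h, 0 < h < 1 -> Rabs (flat c p h / h) <= C * h.
Proof.
  intros Hc. set (N := length p). set (M := S (S N)).
  assert (HM : 0 < INR M) by (apply lt_0_INR; unfold M; lia).
  set (q := (c / INR M) ^ M).
  assert (Hq : 0 < q) by (apply pow_lt, Rdiv_lt_0_compat; assumption).
  pose proof (pabs_sum_ge0 p) as HS.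
  exists (pabs_sum p / q). split; [apply Rdiv_le_0_compat; assumption |].
  intros h [Hh0 Hh1]. rewrite flat_pos by exact Hh0.
  set (y := / h).
  assert (Hy : 1 < y) by (unfold y; rewrite <- Rinv_1; apply Rinv_lt_contravar; lra).
  assert (Hyh : y * h = 1) by (unfold y; field; lra).
  set (E := exp (c * y)).
  assert (HE0 : 0 < E) by apply exp_pos.
  (* e^{c y} beats [y^(N+2)] *)
  assert (HE : q * (y ^ N * y * y) <= E).
  { unfold E, q. replace (y ^ N * y * y) with (y ^ M) by (unfold M; simpl; ring).
    rewrite <- Rpow_mult_distr. replace (c / INR M * y) with (c * y / INR M) by (field; lra).
    apply pow_div_le_exp; [unfold M; lia | nra]. }
  assert (HyN : 1 <= y ^ N) by (apply pow_R1_Rle; lra).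
  pose proof (Rabs_peval_le p y (Rlt_le _ _ Hy)) as HB. fold N in HB.
  rewrite exp_Ropp. fold E.
  replace (peval p y * / E / h) with (peval p y * y * / E) by (unfold y; field; lra).
  rewrite !Rabs_mult, (Rabs_right y), (Rabs_right (/ E)) by (try apply Rle_ge, Rlt_le, Rinv_0_lt_compat; lra).
  apply Rmult_le_reg_r with E; [exact HE0 |]. rewrite Rmult_assoc, Rinv_l, Rmult_1_r by lra.
  assert (Hc1 : pabs_sum p / q * h * (q * (y ^ N * y * y)) = pabs_sum p * y ^ N * y).
  { replace (pabs_sum p / q * h * (q * (y ^ N * y * y)))
      with (pabs_sum p * y ^ N * y * (y * h) * (q / q)) by (field; lra).
    rewrite Hyh. unfold Rdiv. rewrite Rinv_r by lra. ring. }
  assert (0 <= pabs_sum p / q * h) by (apply Rmult_le_pos; [apply Rdiv_le_0_compat |]; lra).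
  assert (pabs_sum p / q * h * (q * (y ^ N * y * y)) <= pabs_sum p / q * h * E)
    by (apply Rmult_le_compat_l; assumption).
  nra.
Qed.

Lemma derivable_pt_lim_flat_0 c p : 0 < c -> derivable_pt_lim (flat c p) 0 0.
Proof.
  intros Hc eps Heps. destruct (Rabs_flat_div_le c p Hc) as [C [HC HB]].
  assert (Hd : 0 < Rmin 1 (eps / (C + 1)))
    by (apply Rmin_glb_lt; [lra | apply Rdiv_lt_0_compat; lra]).
  exists (mkposreal _ Hd). intros h Hh0 Hh. simpl in Hh.
  pose proof (Rmin_l 1 (eps / (C + 1))). pose proof (Rmin_r 1 (eps / (C + 1))).
  rewrite Rplus_0_l, (flat_nonpos c p 0), Rminus_0_r, Rminus_0_r by lra.
  destruct (Rle_or_lt h 0) as [Hn | Hp].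
  - rewrite flat_nonpos by exact Hn. unfold Rdiv. rewrite Rmult_0_l, Rabs_R0. exact Heps.
  - rewrite Rabs_right in Hh by lra.
    eapply Rle_lt_trans; [apply HB; lra |].
    assert (Hh2 : h * (C + 1) < eps).
    { apply Rlt_le_trans with (eps / (C + 1) * (C + 1)); [apply Rmult_lt_compat_r; lra |].
      right. field. lra. }
    nra.
Qed.

Lemma derivable_pt_lim_flat c p v : 0 < c ->
  derivable_pt_lim (flat c p) v (flat c (flat_der c p) v).
Proof.
  intros Hc. destruct (Rtotal_order v 0) as [Hn | [H0 | Hp]].
  - rewrite flat_nonpos by lra.
    apply derivable_pt_lim_local with (fun _ => 0) (- v); [lra | | apply derivable_pt_lim_const].
    intros y Hy. apply Rabs_def2 in Hy. rewrite flat_nonpos by lra. reflexivity.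
  - subst v. rewrite flat_nonpos by lra. apply derivable_pt_lim_flat_0, Hc.
  - apply derivable_pt_lim_local with (fun y => peval p (/ y) * exp (- (c * / y))) v; [lra | |].
    { intros y Hy. apply Rabs_def2 in Hy. rewrite flat_pos by lra. reflexivity. }
    rewrite flat_pos by exact Hp. unfold flat_der. simpl.
    rewrite peval_padd, !peval_pscale.
    apply is_derive_Reals.
    evar (D1 : R).
    assert (H1 : is_derive (fun y => peval p (/ y)) v D1).
    { apply (is_derive_comp (peval p) Rinv); [apply is_derive_Reals, derivable_pt_lim_peval |].
      auto_derive; [lra |]. subst D1. reflexivity. }
    subst D1. evar (D2 : R).
    assert (H2 : is_derive (fun y => exp (- (c * / y))) v D2).
    { auto_derive; [lra |]. subst D2. reflexivity. }
    subst D2.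
    pose proof (is_derive_mult _ _ _ _ _ H1 H2 Rmult_comm) as H3.
    eapply is_derive_ext; [intros; reflexivity |].
    match type of H3 with is_derive _ _ ?V => replace (_ * exp (- (c * / v))) with V end;
      [exact H3 |].
    unfold scal, mult, plus; simpl. unfold mult; simpl. field. lra.
Qed.

Lemma Cn_flat c n : 0 < c -> forall p, Cn n (flat c p).
Proof.
  intros Hc. induction n as [|n IH]; intros p; [exact I |].
  exists (flat c (flat_der c p)). split; [intros v; apply derivable_pt_lim_flat, Hc | apply IH].
Qed.

Section Bump.
Variables (c k : R).
Hypothesis Hc : 0 < c.

Definition bump (x : R) : R := cos (k * x) * flat c (1 :: nil) (cos (k * x)).

Definition bump' (x : R) : R := flat c (1 :: c :: nil) (cos (k * x)) * (- sin (k * x) * k).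

Definition bump'' (x : R) : R :=
  flat c (flat_der c (1 :: c :: nil)) (cos (k * x)) * (- sin (k * x) * k) * (- sin (k * x) * k)
  + flat c (1 :: c :: nil) (cos (k * x)) * (- cos (k * x) * k * k).

Lemma derivable_pt_lim_id_mult_flat v :
  derivable_pt_lim (fun v => v * flat c (1 :: nil) v) v (flat c (1 :: c :: nil) v).
Proof.
  replace (flat c (1 :: c :: nil) v)
    with (1 * flat c (1 :: nil) v + id v * flat c (flat_der c (1 :: nil)) v).
  - apply (derivable_pt_lim_mult id (flat c (1 :: nil)));
      [apply derivable_pt_lim_id | apply derivable_pt_lim_flat, Hc].
  - unfold id. destruct (Rle_or_lt v 0).
    + rewrite !flat_nonpos by assumption. ring.
    + rewrite !flat_pos by assumption. unfold flat_der. simpl. field. lra.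
Qed.

Lemma derivable_pt_lim_scal_id x : derivable_pt_lim (fun x => k * x) x k.
Proof.
  pose proof (derivable_pt_lim_scal id k x 1 (derivable_pt_lim_id x)) as H.
  rewrite Rmult_1_r in H. exact H.
Qed.

Lemma derivable_pt_lim_cos_scal x : derivable_pt_lim (fun x => cos (k * x)) x (- sin (k * x) * k).
Proof.
  apply (derivable_pt_lim_comp (fun x => k * x) cos); [| apply derivable_pt_lim_cos].
  apply derivable_pt_lim_scal_id.
Qed.

Lemma derivable_pt_lim_sin_scal x : derivable_pt_lim (fun x => sin (k * x)) x (cos (k * x) * k).
Proof.
  apply (derivable_pt_lim_comp (fun x => k * x) sin); [| apply derivable_pt_lim_sin].
  apply derivable_pt_lim_scal_id.
Qed.

Lemma derivable_pt_lim_bump x : derivable_pt_lim bump x (bump' x).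
Proof.
  apply (derivable_pt_lim_comp (fun x => cos (k * x)) (fun v => v * flat c (1 :: nil) v)).
  - apply derivable_pt_lim_cos_scal.
  - apply derivable_pt_lim_id_mult_flat.
Qed.

Lemma derivable_pt_lim_bump' x : derivable_pt_lim bump' x (bump'' x).
Proof.
  apply (derivable_pt_lim_mult (fun x => flat c (1 :: c :: nil) (cos (k * x)))
                               (fun x => - sin (k * x) * k)).
  - apply (derivable_pt_lim_comp (fun x => cos (k * x)) (flat c (1 :: c :: nil)));
      [apply derivable_pt_lim_cos_scal | apply derivable_pt_lim_flat, Hc].
  - replace (- cos (k * x) * k * k) with (- (cos (k * x) * k) * k) by ring.
    apply derivable_pt_lim_scal_right with (f := fun x => - sin (k * x)).
    apply (derivable_pt_lim_opp (fun x => sin (k * x))), derivable_pt_lim_sin_scal.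
Qed.

Lemma smooth_bump : smooth bump.
Proof.
  intros n. unfold bump.
  apply Cn_comp with (f := fun x => cos (k * x)) (g := fun v => v * flat c (1 :: nil) v).
  - apply Cn_comp with (f := fun x => k * x) (g := cos);
      [apply Cn_mult; [apply Cn_const | apply Cn_id] | apply Cn_cos_sin].
  - apply Cn_mult; [apply Cn_id | apply Cn_flat, Hc].
Qed.

Lemma Derive_n_bump_2 x : Derive_n bump 2 x = bump'' x.
Proof.
  simpl. rewrite (Derive_ext _ bump').
  - apply is_derive_unique, is_derive_Reals, derivable_pt_lim_bump'.
  - intros t. apply is_derive_unique, is_derive_Reals, derivable_pt_lim_bump.
Qed.

Lemma bump_closed_form x : 0 < cos (k * x) ->
  let v := cos (k * x) in let e := exp (- (c / v)) in
  bump x = v * e /\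
  bump'' x = - (k ^ 2 * (v ^ 4 + c * v ^ 3 - c ^ 2 * (1 - v ^ 2))) * e / v ^ 3.
Proof.
  intros Hv v e. unfold bump, bump''. fold v.
  rewrite !flat_pos by exact Hv. unfold flat_der. simpl. unfold e, Rdiv.
  pose proof (sin2 (k * x)) as Hsin. fold v in Hsin. unfold Rsqr in Hsin.
  split; [ring |].
  match goal with
  | |- ?A * ?B * ?C + _ = _ =>
      replace (A * B * C) with (A * (k * k * (sin (k * x) * sin (k * x)))) by ring
  end.
  assert (Hv0 : v <> 0) by (unfold v; lra).
  rewrite Hsin. clearbody v. field. exact Hv0.
Qed.

End Bump.

(* By [bump_closed_form], [0 < lam bump + bump''] at [v = cos (k x)] is this
   inequality for [c = 2 s^3], multiplied by [v^3 / e]. *)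
Lemma bump_profile_lt (k2 lam s v : R) :
  0 <= k2 -> 0 < s <= 1 / 2 -> k2 * s < lam - k2 -> 0 < v <= 1 ->
  k2 * (v ^ 4 + 2 * s ^ 3 * v ^ 3 - (2 * s ^ 3) ^ 2 * (1 - v ^ 2)) < lam * v ^ 4.
Proof.
  intros Hk2 Hs Hks Hv.
  assert (Hv3 : 0 < v ^ 3) by (apply pow_lt; lra).
  assert (Hv4 : 0 < v ^ 4) by (apply pow_lt; lra).
  assert (Hs3 : 0 < s ^ 3) by (apply pow_lt; lra).
  destruct (Rle_or_lt s v) as [Hsv | Hvs].
  - assert (H1 : 2 * s ^ 3 * v ^ 3 <= s * v ^ 4).
    { replace (2 * s ^ 3 * v ^ 3) with (2 * s ^ 2 * (s * v ^ 3)) by ring.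
      replace (s * v ^ 4) with (s * (v * v ^ 3)) by ring.
      assert (s * v ^ 3 <= v * v ^ 3) by (apply Rmult_le_compat_r; lra).
      assert (2 * s ^ 2 <= s) by nra.
      apply Rle_trans with (2 * s ^ 2 * (v * v ^ 3));
        [apply Rmult_le_compat_l | apply Rmult_le_compat_r]; nra. }
    assert (H2 : 0 <= (2 * s ^ 3) ^ 2 * (1 - v ^ 2))
      by (apply Rmult_le_pos; [apply pow2_ge_0 | nra]).
    assert (0 <= k2 * (s * v ^ 4 - 2 * s ^ 3 * v ^ 3 + (2 * s ^ 3) ^ 2 * (1 - v ^ 2)))
      by (apply Rmult_le_pos; lra).
    assert (0 < (lam - k2 - k2 * s) * v ^ 4) by (apply Rmult_lt_0_compat; lra).
    nra.
  - (* near the boundary the correction term [c v^3 - c^2 (1 - v^2)] is negative *)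
    assert (Hv3s : v ^ 3 < s ^ 3) by (simpl; assert (v * v < s * s) by nra; nra).
    assert (Hvv : v ^ 2 <= 1 / 4) by nra.
    assert (s ^ 3 * (3 / 4) <= s ^ 3 * (1 - v ^ 2)) by (apply Rmult_le_compat_l; lra).
    assert (H1 : v ^ 3 - 2 * s ^ 3 * (1 - v ^ 2) < 0) by lra.
    assert (H2 : 2 * s ^ 3 * v ^ 3 - (2 * s ^ 3) ^ 2 * (1 - v ^ 2) < 0).
    { replace (2 * s ^ 3 * v ^ 3 - (2 * s ^ 3) ^ 2 * (1 - v ^ 2))
        with (2 * s ^ 3 * (v ^ 3 - 2 * s ^ 3 * (1 - v ^ 2))) by ring.
      nra. }
    assert (k2 < lam) by nra.
    nra.
Qed.

Lemma bump_profile_parameter (k2 lam : R) : 0 <= k2 < lam ->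
  exists s, 0 < s <= 1 / 2 /\ k2 * s < lam - k2.
Proof.
  intros Hk2. exists (Rmin (1 / 2) ((lam - k2) / (k2 + 1))).
  pose proof (Rmin_l (1 / 2) ((lam - k2) / (k2 + 1))).
  pose proof (Rmin_r (1 / 2) ((lam - k2) / (k2 + 1))).
  assert (0 < Rmin (1 / 2) ((lam - k2) / (k2 + 1)))
    by (apply Rmin_glb_lt; [lra | apply Rdiv_lt_0_compat; lra]).
  assert ((k2 + 1) * ((lam - k2) / (k2 + 1)) = lam - k2) by (field; lra).
  repeat split; nra.
Qed.

Lemma cos_scal_Rabs (k x : R) : cos (k * x) = cos (k * Rabs x).
Proof.
  destruct (Rle_or_lt 0 x).
  - rewrite Rabs_right by lra. reflexivity.
  - rewrite Rabs_left, <- cos_neg by lra. f_equal. ring.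
Qed.

Lemma Derive_n_bump_band (c k a0 : R) : 0 < c -> 0 < a0 -> k * a0 = PI / 2 ->
  forall n x, a0 <= Rabs x <= 2 * a0 -> Derive_n (bump c k) n x = 0.
Proof.
  intros Hc Ha0 Hka0. pose proof PI_RGT_0.
  pose proof (smooth_deriv_seq _ (smooth_bump c k Hc)) as HD.
  assert (Hzero : forall x, a0 <= Rabs x <= 2 * a0 -> bump c k x = 0).
  { intros x Hx. unfold bump. rewrite flat_nonpos; [ring |].
    rewrite cos_scal_Rabs. apply cos_le_0; nra. }
  intros n x Hx. destruct (Rle_or_lt 0 x).
  - rewrite Rabs_right in Hx by lra.
    apply (deriv_seq_zero_on _ a0 (2 * a0)); [exact HD | lra | | lra].
    intros y Hy. apply Hzero. rewrite Rabs_right; lra.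
  - rewrite Rabs_left in Hx by lra.
    apply (deriv_seq_zero_on _ (- (2 * a0)) (- a0)); [exact HD | lra | | lra].
    intros y Hy. apply Hzero. rewrite Rabs_left; lra.
Qed.

Lemma bump_supersolution (k lam s x : R) :
  0 < s <= 1 / 2 -> k ^ 2 * s < lam - k ^ 2 -> 0 < cos (k * x) ->
  0 < bump (2 * s ^ 3) k x /\ 0 < lam * bump (2 * s ^ 3) k x + bump'' (2 * s ^ 3) k x.
Proof.
  intros Hs Hks Hv0.
  assert (Hv : 0 < cos (k * x) <= 1) by (split; [exact Hv0 | apply COS_bound]).
  pose proof (bump_closed_form (2 * s ^ 3) k x Hv0) as HB. cbv zeta in HB.
  set (c := 2 * s ^ 3) in *. set (v := cos (k * x)) in *. set (e := exp (- (c / v))) in *.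
  destruct HB as [-> ->].
  assert (He : 0 < e) by apply exp_pos.
  assert (Hv3 : 0 < v ^ 3) by (apply pow_lt; lra).
  pose proof (bump_profile_lt (k ^ 2) lam s v (pow2_ge_0 k) Hs Hks Hv) as Hprofile.
  fold c in Hprofile.
  split; [apply Rmult_lt_0_compat; lra |].
  replace (lam * (v * e) + - (k ^ 2 * (v ^ 4 + c * v ^ 3 - c ^ 2 * (1 - v ^ 2))) * e / v ^ 3)
    with (e / v ^ 3 * (lam * v ^ 4 - k ^ 2 * (v ^ 4 + c * v ^ 3 - c ^ 2 * (1 - v ^ 2))))
    by (field; lra).
  apply Rmult_lt_0_compat; [apply Rdiv_lt_0_compat |]; lra.
Qed.

Lemma test_function (a0 lam : R) : 0 < a0 -> (PI / (2 * a0)) ^ 2 < lam ->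
  exists D : nat -> R -> R, deriv_seq D /\
    (forall n x, a0 <= Rabs x -> D n x = 0) /\
    (forall x, Rabs x < a0 -> 0 < D 0%nat x /\ 0 < lam * D 0%nat x + D 2%nat x).
Proof.
  intros Ha0 Hlam. pose proof PI_RGT_0.
  set (k := PI / (2 * a0)) in *.
  assert (Hka0 : k * a0 = PI / 2) by (unfold k; field; lra).
  destruct (bump_profile_parameter (k ^ 2) lam (conj (pow2_ge_0 k) Hlam)) as [s [Hs Hks]].
  assert (Hc : 0 < 2 * s ^ 3) by (pose proof (pow_lt s 3); lra).
  pose proof (Derive_n_bump_band _ k a0 Hc Ha0 Hka0) as Hband.
  (* [bump] is periodic: cut it off inside the band where all its derivatives vanish *)
  exists (clip (2 * a0) (Derive_n (bump (2 * s ^ 3) k))). split; [| split].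
  - apply deriv_seq_clip with a0; [lra | exact Hband | apply smooth_deriv_seq, smooth_bump, Hc].
  - intros n x Hx. exact (clip_zero a0 _ _ Hband n x Hx).
  - intros x Hx. rewrite !clip_eq by lra. rewrite Derive_n_bump_2 by exact Hc. simpl Derive_n.
    apply bump_supersolution; [exact Hs | exact Hks |].
    rewrite cos_scal_Rabs. pose proof (Rabs_pos x). apply cos_gt_0; nra.
Qed.

Lemma weak_sol_test_integral (a a0 : R) (u F : R -> R) (D : nat -> R -> R) :
  0 < a0 < a -> cont_on_closed a u -> (forall x, -a < x < a -> continuity_pt F x) ->
  weak_sol a 0 u F -> deriv_seq D -> (forall n x, a0 <= Rabs x -> D n x = 0) ->
  exists pr : Riemann_integrable
                (fun x => F x * D 0%nat x + -1 * (u x * (0 * D 1%nat x - D 2%nat x))) (-a) a,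
    RiemannInt pr = 0.
Proof.
  intros Ha Hu HF Hweak HD Hout.
  assert (cu : forall x, -a < x < a -> continuity_pt u x)
    by (intros x Hx; exact (continuity_pt_of_cont_on_closed a u x Hu Hx)).
  assert (cD : forall n x, continuity_pt (D n) x) by (intros; apply deriv_seq_continuity_pt, HD).
  assert (Hzero : forall n x, -a <= x <= -a0 \/ a0 <= x <= a -> D n x = 0).
  { intros n x Hx. apply Hout. destruct Hx; [rewrite Rabs_left1 | rewrite Rabs_right]; lra. }
  assert (Hsupp : compact_supp_in a (D 0%nat)) by (exists a0; split; [lra | exact (Hout 0%nat)]).
  assert (Hi1 : Riemann_integrable (fun x => u x * (0 * D 1%nat x - D 2%nat x)) (-a) a).
  { apply Riemann_integrable_zero_outside with (-a0) a0; [lra | lra | |].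
    - intros x Hx. pose proof (cu x ltac:(lra)). pose proof (cD 1%nat x). pose proof (cD 2%nat x).
      solve_continuity_pt.
    - intros x Hx. rewrite !(Hzero _ x Hx). ring. }
  assert (Hi2 : Riemann_integrable (fun x => F x * D 0%nat x) (-a) a).
  { apply Riemann_integrable_zero_outside with (-a0) a0; [lra | lra | |].
    - intros x Hx. pose proof (HF x ltac:(lra)). pose proof (cD 0%nat x). solve_continuity_pt.
    - intros x Hx. rewrite (Hzero _ x Hx). ring. }
  exists (RiemannInt_P10 (-1) Hi2 Hi1).
  rewrite (RiemannInt_P13 Hi2 Hi1), (Hweak D HD Hsupp Hi1 Hi2). ring.
Qed.

Lemma weak_sol_supersolution_absurd (a a0 lam : R) (u F : R -> R) (D : nat -> R -> R) :
  0 < a0 < a -> cont_on_closed a u -> (forall x, -a < x < a -> continuity_pt F x) ->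
  weak_sol a 0 u F -> deriv_seq D ->
  (forall n x, a0 <= Rabs x -> D n x = 0) ->
  (forall x, Rabs x < a0 -> 0 < D 0%nat x /\ 0 < lam * D 0%nat x + D 2%nat x) ->
  (forall x, Rabs x < a0 -> 0 < u x /\ lam * u x <= F x) -> False.
Proof.
  intros Ha Hu HF Hweak HD Hout Hin Hsup.
  destruct (weak_sol_test_integral a a0 u F D Ha Hu HF Hweak HD Hout) as [Hi Hint0].
  set (g := fun x => u x * (lam * D 0%nat x + D 2%nat x)).
  assert (Hg : forall x, Rabs x < a0 -> 0 < g x
    /\ g x <= F x * D 0%nat x + -1 * (u x * (0 * D 1%nat x - D 2%nat x))).
  { intros x Hx. destruct (Hin x Hx) as [H0 H2]. destruct (Hsup x Hx) as [Hux HFx].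
    unfold g. split; [apply Rmult_lt_0_compat; assumption |].
    assert (0 <= (F x - lam * u x) * D 0%nat x) by (apply Rmult_le_pos; lra).
    nra. }
  assert (Ha00 : Rabs 0 < a0) by (rewrite Rabs_R0; lra).
  assert (cg : continuity_pt g 0).
  { unfold g. pose proof (continuity_pt_of_cont_on_closed a u 0 Hu ltac:(lra)).
    pose proof (deriv_seq_continuity_pt D 0 0 HD). pose proof (deriv_seq_continuity_pt D 2 0 HD).
    solve_continuity_pt. }
  destruct (continuity_pt_ge_half g 0 cg (proj1 (Hg 0 Ha00))) as [d [Hd Hgd]].
  set (d' := Rmin d a0 / 2).
  pose proof (Rmin_l d a0). pose proof (Rmin_r d a0).
  assert (Hd' : 0 < d') by (unfold d'; assert (0 < Rmin d a0) by (apply Rmin_glb_lt; lra); lra).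
  enough (0 < RiemannInt Hi) by lra.
  apply (RiemannInt_gt0 _ (-a) a 0 d' (g 0 / 2) Hi); [lra | pose proof (proj1 (Hg 0 Ha00)); lra
    | unfold d'; lra | unfold d'; lra | |].
  - intros x Hx. destruct (Rlt_or_le (Rabs x) a0) as [Hin0 | Hout0].
    + destruct (Hg x Hin0). lra.
    + rewrite !Hout by exact Hout0. lra.
  - intros x Hx. assert (Hx' : Rabs (x - 0) < d /\ Rabs x < a0)
      by (rewrite Rminus_0_r; split; apply Rabs_def1; unfold d' in Hx; lra).
    destruct Hx' as [Hxd Hxa]. specialize (Hgd x Hxd). destruct (Hg x Hxa). lra.
Qed.

Lemma f_m_ge (r K mu w m : R) :
  0 <= r -> 0 <= mu -> 0 < K -> 0 < w -> 0 < m -> w + m < K / 2 * (1 - mu) ->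
  (r * (1 + mu) / 2 - mu) * m <= f_m r K mu w m.
Proof.
  intros Hr Hmu HK Hw Hm Hsum. unfold f_m.
  assert (Ht : (w + m) / K < (1 - mu) / 2).
  { apply Rmult_lt_reg_r with K; [exact HK |].
    replace ((w + m) / K * K) with (w + m) by (field; lra). lra. }
  assert (0 <= r * m * ((1 - mu) / 2 - (w + m) / K)) by (apply Rmult_le_pos; nra).
  nra.
Qed.

Lemma chi_nonneg_pos (v : R) : 0 < v -> chi_nonneg v = 1.
Proof. intros Hv. unfold chi_nonneg. destruct (Rle_dec 0 v); [reflexivity | lra]. Qed.

Lemma continuity_pt_f_m_chi (r K mu : R) (w m : R -> R) (x : R) :
  continuity_pt w x -> continuity_pt m x -> 0 < w x -> 0 < m x ->
  continuity_pt (fun y => f_m r K mu (w y) (m y) * chi_nonneg (w y) * chi_nonneg (m y)) x.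
Proof.
  intros Hw Hm Hwx Hmx.
  pose proof (continuity_pt_chi_nonneg w x Hw Hwx).
  pose proof (continuity_pt_chi_nonneg m x Hm Hmx).
  unfold f_m, Rdiv. solve_continuity_pt.
Qed.

Lemma principal_frequency_sq (mu : R) : mu < 1 ->
  (PI / (2 * (PI / sqrt (2 * (1 - mu))))) ^ 2 = (1 - mu) / 2.
Proof.
  intros Hmu. pose proof PI_RGT_0.
  assert (Hsq : 0 < sqrt (2 * (1 - mu))) by (apply sqrt_lt_R0; lra).
  replace ((PI / (2 * (PI / sqrt (2 * (1 - mu))))) ^ 2)
    with (sqrt (2 * (1 - mu)) * sqrt (2 * (1 - mu)) / 4) by (field; lra).
  rewrite sqrt_sqrt by lra. field.
Qed.

Theorem mainTheorem7 (r K mu wstar mstar a : R) (w m : R -> R) :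
  assumption1 r K mu ->
  0 < wstar < 1 -> 0 < mstar < K ->
  f_w mu wstar mstar = 0 -> f_m r K mu wstar mstar = 0 ->
  PI / sqrt (2 * (1 - mu)) < a ->
  solves_Pa r K mu a 0 wstar mstar w m ->
  (forall x, -a < x < a -> 0 < w x /\ 0 < m x) ->
  exists x, - (PI / sqrt (2 * (1 - mu))) <= x <= PI / sqrt (2 * (1 - mu)) /\
    K / 2 * (1 - mu) <= w x + m x.
Proof.
  intros HA _ _ _ _ Ha [Hw [Hm [_ [Hweak _]]]] Hpos.
  destruct HA as [Hr [Hmu0 [_ [_ [HmuK [_ [HK0 _]]]]]]].
  assert (Ha0 : 0 < PI / sqrt (2 * (1 - mu)))
    by (apply Rdiv_lt_0_compat; [apply PI_RGT_0 | apply sqrt_lt_R0; lra]).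
  set (a0 := PI / sqrt (2 * (1 - mu))) in *.
  apply NNPP. intros Hno.
  set (lam := r * (1 + mu) / 2 - mu).
  assert (Hlam : (PI / (2 * a0)) ^ 2 < lam)
    by (unfold a0; rewrite principal_frequency_sq by lra; unfold lam; nra).
  destruct (test_function a0 lam Ha0 Hlam) as [D [HD [Hout Hin]]].
  refine (weak_sol_supersolution_absurd a a0 lam m _ D ltac:(lra) Hm _ Hweak HD Hout Hin _).
  - intros x Hx. destruct (Hpos x Hx) as [Hwx Hmx].
    apply continuity_pt_f_m_chi; try assumption; apply continuity_pt_of_cont_on_closed with a; assumption.
  - intros x Hx. apply Rabs_def2 in Hx. destruct (Hpos x ltac:(lra)) as [Hwx Hmx].
    rewrite !chi_nonneg_pos, !Rmult_1_r by assumption. split; [exact Hmx |].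
    apply f_m_ge; try lra.
    destruct (Rlt_or_le (w x + m x) (K / 2 * (1 - mu))) as [Hlt | Hge]; [exact Hlt |].
    exfalso. apply Hno. exists x. split; lra.
Qed.
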